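(* Let $\Gamma=(V,E)$ be a reflexive finite $k$-separable graph such that $\Gamma^-$ is not $k$-faithful. Then: (i) the intersection of two distinct $k$-super-fragments of $\Gamma$ has cardinality less than $k$; (ii) moreover, if $k\ge 2$ and $\kappa_k(\Gamma)=\kappa_{k-1}(\Gamma)$, then the intersection of two distinct $k$-super-fragments of $\Gamma$ has cardinality less than $k-1$.
   Context: A graph is a pair $\Gamma=(V,E)$ with $E\subseteq V\times V$; finite means $V$ finite; reflexive means $(x,x)\in E$ for all $x$. $\Gamma(x)=\{y:(x,y)\in E\}$, $\Gamma(X)=\bigcup_{x\in X}\Gamma(x)$; the reverse graph is $\Gamma^-=(V,E^-)$, $E^-=\{(x,y):(y,x)\in E\}$. $\partial(X)=\Gamma(X)\setminus X$, $\nabla(X)=V\setminus\Gamma(X)$. $\Gamma$ is $k$-separable if there is a finite $X$ with $|X|\ge k$, $|\nabla(X)|\ge k$; then $\kappa_k(\Gamma)=\min\{|\partial(X)|: |X|\ge k,|\nabla(X)|\ge k\}$. A $k$-fragment is a set $X$ with $|X|\ge k$, $|\nabla(X)|\ge k$, $|\partial(X)|=\kappa_k(\Gamma)$; a $k$-atom is a $k$-fragment of minimum cardinality; a $k$-super-fragment is a $k$-fragment of maximum cardinality. A graph is $k$-faithful if $|A|\le|\nabla(A)|$ for a $k$-atom $A$ (all $k$-atoms have the same cardinality); the same notions for $\Gamma^-$ use $\Gamma^-$ in place of $\Gamma$. *)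

From mathcomp Require Import all_boot.
Set Implicit Arguments. Unset Strict Implicit. Unset Printing Implicit Defensive.

Section Graphs.
Variables (V : finType) (E : rel V).

Definition nbh (X : {set V}) : {set V} := [set y | [exists x in X, E x y]].
Definition bnd (X : {set V}) : {set V} := nbh X :\: X.
Definition nab (X : {set V}) : {set V} := ~: nbh X.

Definition kcand (k : nat) (X : {set V}) : bool := (k <= #|X|) && (k <= #|nab X|).

Definition separable (k : nat) : Prop := exists X : {set V}, kcand k X.

(* kappa_k = min { |d(X)| : |X| >= k, |nabla X| >= k }  (meaningful when separable;
   #|V| is a harmless default since |d(X)| <= |V|) *)
Definition kappa (k : nat) : nat := \big[minn/#|V|]_(X : {set V} | kcand k X) #|bnd X|.

Definition fragment (k : nat) (X : {set V}) : bool := kcand k X && (#|bnd X| == kappa k).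

Definition atom (k : nat) (A : {set V}) : Prop :=
  fragment k A /\ forall X : {set V}, fragment k X -> #|A| <= #|X|.

Definition superfragment (k : nat) (S : {set V}) : Prop :=
  fragment k S /\ forall X : {set V}, fragment k X -> #|X| <= #|S|.

(* k-faithful: |A| <= |nabla(A)| for a k-atom A (all k-atoms have equal size) *)
Definition faithful (k : nat) : Prop :=
  separable k /\ exists A : {set V}, atom k A /\ #|A| <= #|nab A|.

End Graphs.

Definition revrel (V : finType) (E : rel V) : rel V := fun x y => E y x.

From mathcomp Require Import all_boot zify.
Set Implicit Arguments. Unset Strict Implicit. Unset Printing Implicit Defensive.

(* In a reflexive graph [V] splits as [X], [bnd X], [nab X], and [bnd] is
   submodular. The complement [nab S] of a superfragment [S] is an atom of
   the reverse graph whose [nab] there has the size of [S]; as the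
   reverse graph is not faithful, [#|S| < #|nab S|]. For distinct
   superfragments [S1], [S2] whose meet is a candidate, submodularity makes
   [bnd (S1 :|: S2)] minimal, so maximality of [S1] forces
   [#|nab (S1 :|: S2)| < k], and counting with [#|S1| < #|nab S1|] bounds
   [#|S1 :&: S2|] by [k - 2]. *)

Lemma bigminn_le (I : eqType) (r : seq I) (P : pred I) (F : I -> nat) x0 j :
  j \in r -> P j -> \big[minn/x0]_(i <- r | P i) F i <= F j.
Proof.
elim: r => [|a r IHr] //; rewrite inE big_cons => /predU1P[<- -> | jr Pj].
  exact: geq_minl.
by case: (P a); [apply: leq_trans (geq_minr _ _) _|]; apply: IHr.
Qed.

Lemma bigminn_attained (I : Type) (r : seq I) (P : pred I) (F : I -> nat) x0 :
  \big[minn/x0]_(i <- r | P i) F i = x0 \/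
  exists2 i, P i & F i = \big[minn/x0]_(i <- r | P i) F i.
Proof.
apply: (big_ind (fun m => m = x0 \/ exists2 i, P i & F i = m)); first by left.
  by move=> a b Ha Hb; rewrite /minn; case: ltnP.
by move=> i Pi; right; exists i.
Qed.

Section Graph.
Variables (V : finType) (E : rel V).

Lemma nbhS (X Y : {set V}) : X \subset Y -> nbh E X \subset nbh E Y.
Proof.
move=> /subsetP sXY; apply/subsetP=> y; rewrite !inE => /existsP[x /andP[xX Exy]].
by apply/existsP; exists x; rewrite sXY.
Qed.

Lemma nbhU (X Y : {set V}) : nbh E (X :|: Y) = nbh E X :|: nbh E Y.
Proof.
apply/setP=> y; rewrite !inE; apply/existsP/orP=> [[x]|[]/existsP[x /andP[xX Exy]]].
  by rewrite inE andb_orl => /orP[]; [left|right]; apply/existsP; exists x.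
all: by exists x; rewrite inE xX ?orbT.
Qed.

Lemma card_nabS (X Y : {set V}) : X \subset Y -> #|nab E Y| <= #|nab E X|.
Proof. by move=> sXY; rewrite subset_leq_card // setCS nbhS. Qed.

Lemma kappa_le k (X : {set V}) : kcand E k X -> kappa E k <= #|bnd E X|.
Proof. by move=> cX; apply: bigminn_le; rewrite ?mem_index_enum. Qed.

Lemma fragmentP k (X : {set V}) :
  kcand E k X -> #|bnd E X| <= kappa E k -> fragment E k X.
Proof. by move=> cX bX; rewrite /fragment cX eqn_leq bX kappa_le. Qed.

Lemma exists_fragment k : separable E k -> exists X, fragment E k X.
Proof.
case=> X0 cX0; case: (bigminn_attained (index_enum _) (kcand E k)
                        (fun X => #|bnd E X|) #|V|) => [kV | [X cX bX]].
  by exists X0; apply: fragmentP; rewrite // [kappa _ _]kV max_card.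
by exists X; rewrite /fragment cX bX eqxx.
Qed.

Lemma sub_nab_rev_nab (X : {set V}) : X \subset nab (revrel E) (nab E X).
Proof.
apply/subsetP=> x xX; rewrite !inE; apply/existsP=> -[y /andP[]].
by rewrite !inE => /existsPn/(_ x); rewrite xX => /negP.
Qed.

Lemma bnd_rev_nab (X : {set V}) : bnd (revrel E) (nab E X) \subset bnd E X.
Proof.
apply/subsetP=> z; rewrite !inE negbK => /andP[nXz nnXz].
rewrite nXz andbT; apply: contraL nnXz => Xz.
by have := subsetP (sub_nab_rev_nab X) z Xz; rewrite /nab !inE.
Qed.

Lemma kcand_rev_nab k (X : {set V}) : kcand E k X -> kcand (revrel E) k (nab E X).
Proof.
case/andP=> kX knX; rewrite /kcand knX (leq_trans kX) //.
exact/subset_leq_card/sub_nab_rev_nab.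
Qed.

End Graph.

(* [revrel (revrel E)] is convertible to [E], so every lemma above also
   applies from the reverse graph back to [E]. *)
Lemma kappa_rev (V : finType) (E : rel V) k :
  separable E k -> kappa (revrel E) k = kappa E k.
Proof.
move=> /exists_fragment[X /andP[cX /eqP bX]].
have cY := kcand_rev_nab cX.
have [|Y /andP[cY' /eqP bY]] := @exists_fragment _ (revrel E) k; first by exists (nab E X).
apply/anti_leq/andP; split.
  apply: leq_trans (kappa_le cY) _; rewrite -bX.
  exact/subset_leq_card/bnd_rev_nab.
apply: leq_trans (kappa_le (kcand_rev_nab cY')) _; rewrite -bY.
exact/subset_leq_card/(bnd_rev_nab (revrel E)).
Qed.

Section Reflexive.
Variables (V : finType) (E : rel V).
Hypothesis E_refl : forall x, E x x.

Lemma sub_nbh (X : {set V}) : X \subset nbh E X.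
Proof. by apply/subsetP=> x xX; rewrite inE; apply/existsP; exists x; rewrite xX E_refl. Qed.

Lemma card_nbh (X : {set V}) : #|X| + #|bnd E X| = #|nbh E X|.
Proof. by have := cardsID X (nbh E X); rewrite (setIidPr (sub_nbh X)). Qed.

Lemma card_partition (X : {set V}) : #|X| + #|bnd E X| + #|nab E X| = #|V|.
Proof. by rewrite card_nbh cardsC. Qed.

Lemma bnd_submod (X Y : {set V}) :
  #|bnd E (X :&: Y)| + #|bnd E (X :|: Y)| <= #|bnd E X| + #|bnd E Y|.
Proof.
have nbhI : #|nbh E (X :&: Y)| <= #|nbh E X :&: nbh E Y|.
  by apply: subset_leq_card; rewrite subsetI !nbhS ?subsetIl ?subsetIr.
have := cardsUI X Y; have := cardsUI (nbh E X) (nbh E Y).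
have := card_nbh X; have := card_nbh Y.
have := card_nbh (X :&: Y); have := card_nbh (X :|: Y); rewrite nbhU.
lia.
Qed.

End Reflexive.

Section Superfragments.
Variables (V : finType) (E : rel V) (k : nat).
Hypothesis E_refl : forall x, E x x.

Lemma superfragment_card (S1 S2 : {set V}) :
  superfragment E k S1 -> superfragment E k S2 -> #|S1| = #|S2|.
Proof. by move=> [f1 max1] [f2 max2]; apply/anti_leq; rewrite max1 ?max2. Qed.

Lemma nab_superfragmentU (S1 S2 : {set V}) :
  superfragment E k S1 -> superfragment E k S2 -> S1 != S2 ->
  kappa E k <= #|bnd E (S1 :&: S2)| -> #|nab E (S1 :|: S2)| < k.
Proof.
move=> sf1 sf2 S12 kI; have eq12 := superfragment_card sf1 sf2.
case: sf1 sf2 => [/andP[/andP[k1 _] /eqP b1] max1] [/andP[_ /eqP b2] _].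
rewrite ltnNge; apply/negP=> kU.
have fU : fragment E k (S1 :|: S2).
  apply: fragmentP; first by rewrite /kcand kU (leq_trans k1) ?subset_leq_card ?subsetUl.
  have := bnd_submod E_refl S1 S2; lia.
have U1 : S1 :|: S2 = S1 by apply/esym/eqP; rewrite eqEcard subsetUl max1.
by move/negP: S12; apply; rewrite eq_sym eqEcard -{1}U1 subsetUr eq12 leqnn.
Qed.
Lemma nab_superfragment_atom (S : {set V}) :
  superfragment E k S -> atom (revrel E) k (nab E S).
Proof.
move=> [/andP[cS /eqP bS] maxS].
have kR : kappa (revrel E) k = kappa E k by apply: kappa_rev; exists S.
have fT : fragment (revrel E) k (nab E S).
  by apply: fragmentP; rewrite ?kcand_rev_nab // kR -bS subset_leq_card ?bnd_rev_nab.
split=> // Y /andP[cY /eqP bY].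
have fX : fragment E k (nab (revrel E) Y).
  apply: fragmentP; first exact: (kcand_rev_nab cY).
  by rewrite -kR -bY subset_leq_card ?(bnd_rev_nab (revrel E)).
have := maxS _ fX; have := card_partition E_refl S; rewrite bS.
have := @card_partition _ (revrel E) E_refl Y; rewrite bY kR.
lia.
Qed.

Hypothesis rev_not_faithful : ~ faithful (revrel E) k.

Lemma superfragment_lt_nab (S : {set V}) :
  superfragment E k S -> #|S| < #|nab E S|.
Proof.
move=> sfS; have aT := nab_superfragment_atom sfS.
have [/andP[cT /eqP bT] _] := aT.
have [/andP[cS /eqP bS] _] := sfS.
have : ~ #|nab E S| <= #|nab (revrel E) (nab E S)|.
  by move=> faithT; apply: rev_not_faithful; split; [exists (nab E S) | exists (nab E S)].
have := card_partition E_refl S; have := @card_partition _ (revrel E) E_refl (nab E S).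
rewrite bS bT kappa_rev; last by exists S.
lia.
Qed.

Lemma card_meet_superfragments (S1 S2 : {set V}) :
  superfragment E k S1 -> superfragment E k S2 -> S1 != S2 ->
  kappa E k <= #|bnd E (S1 :&: S2)| -> #|S1 :&: S2|.+2 <= k.
Proof.
move=> sf1 sf2 S12 kI.
have := nab_superfragmentU sf1 sf2 S12 kI; have := superfragment_lt_nab sf1.
have := superfragment_card sf1 sf2; have := bnd_submod E_refl S1 S2.
have := card_partition E_refl S1; have := card_partition E_refl (S1 :|: S2).
case: sf1 sf2 => [/andP[_ /eqP ->] _] [/andP[_ /eqP ->] _].
have := cardsUI S1 S2; lia.
Qed.

Lemma card_meet_superfragments_lt j (S1 S2 : {set V}) :
  k <= j.+1 -> j <= k -> kappa E k <= kappa E j ->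
  superfragment E k S1 -> superfragment E k S2 -> S1 != S2 ->
  #|S1 :&: S2| < j.
Proof.
move=> kj jk kappa_kj sf1 sf2 S12; rewrite ltnNge; apply/negP=> jI.
have cI : kcand E j (S1 :&: S2).
  have [/andP[/andP[_ kn1] _] _] := sf1.
  by rewrite /kcand jI (leq_trans jk) ?(leq_trans kn1) ?card_nabS ?subsetIl.
have := card_meet_superfragments sf1 sf2 S12 (leq_trans kappa_kj (kappa_le cI)).
lia.
Qed.

End Superfragments.

Theorem theorem4p3 (V : finType) (E : rel V) (k : nat) :
  (forall x : V, E x x) ->
  separable E k ->
  ~ faithful (revrel E) k ->
  (forall S1 S2 : {set V},
     superfragment E k S1 -> superfragment E k S2 -> S1 != S2 ->
     #|S1 :&: S2| < k)
  /\
  (2 <= k -> kappa E k = kappa E k.-1 ->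
   forall S1 S2 : {set V},
     superfragment E k S1 -> superfragment E k S2 -> S1 != S2 ->
     #|S1 :&: S2| < k.-1).
Proof.
(* Separability is implied by the existence of a superfragment. *)
move=> E_refl _ not_faithful; split=> [|k2 kappa_eq] S1 S2.
  exact: card_meet_superfragments_lt.
apply: card_meet_superfragments_lt => //; last by rewrite kappa_eq.
  by rewrite prednK // ltnW.
exact: leq_pred.
Qed.
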